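(* For any fixed $m$, any fixed $k<m$ and any fixed $p\in(0,1)$, with $P\sim(\mathrm{IC}_p)^n$, $$\Pr(\mathrm{CORE}(P)=\mathcal A_k)=1-\exp(-\Theta(n))\quad\text{and}\quad\Pr(\mathrm{EJR{+}}(P)=\mathcal A_k)=1-\exp(-\Theta(n)).$$
   Context: $\mathcal A=[m]$, $\mathcal A_k$ the $k$-subsets. $\mathrm{IC}_p$ is the distribution over $2^{\mathcal A}$ in which each alternative is independently included with probability $p$; $P=(A_1,\dots,A_n)$ has i.i.d. ballots from $\mathrm{IC}_p$. $W\in\mathrm{CORE}(P)$ iff for every nonempty $N'\subseteq[n]$ and $W'\subseteq\mathcal A$ with $|W'|/k\le|N'|/n$ some $j\in N'$ has $|A_j\cap W'|\le|A_j\cap W|$. $W\in\mathrm{EJR{+}}(P)$ iff there are no $a\in\mathcal A\setminus W$, $\ell\ge1$, $N'\subseteq[n]$ with $|N'|\ge\ell n/k$ such that every $j\in N'$ has $a\in A_j$ and $|A_j\cap W|<\ell$. Asymptotics as $n\to\infty$. *)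

From HB Require Import structures.
From mathcomp Require Import all_boot all_order all_algebra.
From mathcomp Require Import boolp classical_sets reals.
From mathcomp Require Import sequences exp.
Unset Printing Implicit Defensive.
Import Order.TTheory GRing.Theory Num.Theory.
Local Open Scope ring_scope.
Local Open Scope classical_set_scope.

Definition profile (n m : nat) := {ffun 'I_n -> {set 'I_m}}.

Definition committees (m k : nat) : set {set 'I_m} := [set W | #|W| = k].

Definition in_core (n m k : nat) (P : profile n m) (W : {set 'I_m}) : Prop :=
  #|W| = k /\
  forall (N' : {set 'I_n}) (W' : {set 'I_m}),
    (0 < #|N'|)%N ->
    ((#|W'|%:R / k%:R : rat) <= #|N'|%:R / n%:R) ->
    exists2 j, j \in N' & (#|P j :&: W'| <= #|P j :&: W|)%N.

Definition CORE (n m k : nat) (P : profile n m) : set {set 'I_m} :=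
  [set W | in_core n m k P W].

Definition in_EJRp (n m k : nat) (P : profile n m) (W : {set 'I_m}) : Prop :=
  #|W| = k /\
  ~ (exists (a : 'I_m) (l : nat) (N' : {set 'I_n}),
       [/\ a \notin W, (1 <= l)%N,
           ((l%:R * n%:R / k%:R : rat) <= #|N'|%:R) &
           forall j, j \in N' -> a \in P j /\ (#|P j :&: W| < l)%N]).

Definition EJRp (n m k : nat) (P : profile n m) : set {set 'I_m} :=
  [set W | in_EJRp n m k P W].

(* IC_p: each alternative independently included with probability p. *)
Definition IC (R : realType) (m : nat) (p : R) (A : {set 'I_m}) : R :=
  p ^+ #|A| * (1 - p) ^+ (m - #|A|).

Definition PrIC (R : realType) (n m : nat) (p : R) (E : profile n m -> Prop) : R :=
  \sum_(P : profile n m | `[< E P >]) \prod_(j < n) IC R m p (P j).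

(* "q_n = 1 - exp(-Theta(n))": there are c1, c2 > 0 such that eventually
   exp(-c2 n) <= 1 - q_n <= exp(-c1 n). *)
Definition one_minus_exp_neg_Theta_n (R : realType) (q : nat -> R) : Prop :=
  exists (c1 c2 : R) (N : nat), 0 < c1 /\ 0 < c2 /\
    forall n, (N <= n)%N ->
      expR (- (c2 * n%:R)) <= 1 - q n <= expR (- (c1 * n%:R)).

From HB Require Import structures.
From mathcomp Require Import all_boot all_order all_algebra perm.
From mathcomp Require Import boolp classical_sets reals.
From mathcomp Require Import sequences exp.
From mathcomp Require Import lra zify.
Import Order.TTheory GRing.Theory Num.Theory.
Local Open Scope ring_scope.

(* If [CORE(P)] (resp. [EJR+(P)]) misses a [k]-committee [W], some witness [W'] (resp. an
   alternative [a] and a level [l]) is supported by at least a [|W'|/k] (resp. [l/k]) fraction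
   of the voters. Under [IC_p] one voter supports a fixed witness with probability strictly
   below that fraction, because by exchangeability a voter's expected share of [x] among the
   approved members of [x |: D] is [1 / (|D| + 1)] at most. A Chernoff bound makes each of the
   finitely many witness events exponentially unlikely, and the union bound gives the upper
   estimate. Conversely, the unanimous profile approving a single [a0] outside a committee
   [W0] has probability [(p (1 - p)^(m-1))^n], and there everybody blocks [W0]. *)

Section GeometricBounds.
Context {R : realType}.

Lemma bernoulli_ineq n (x : R) : 0 <= x -> 1 + n%:R * x <= (1 + x) ^+ n.
Proof.
move=> x0; elim: n => [|n IH]; first by rewrite mul0r addr0 expr0.
rewrite exprS -natr1.
have : 0 <= n%:R * x by rewrite mulr_ge0.
nra.
Qed.

Lemma exprDn_le_quadratic (x : R) k : 0 <= x <= 1 ->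
  (1 + x) ^+ k <= 1 + k%:R * x + 4 ^+ k * x ^+ 2.
Proof.
case/andP => x0 x1; elim: k => [|k IH]; first by rewrite expr0 mul0r addr0 mul1r; nra.
have k_le4k : k%:R <= 4 ^+ k :> R.
  have := bernoulli_ineq k _ (ler0n R 3); rewrite -[1 + 3]/4.
  by apply: le_trans; have := ler0n R k; nra.
have ge0_4k : 0 <= 4 ^+ k :> R by rewrite exprn_ge0.
rewrite exprS exprSr -natr1.
apply: le_trans (ler_wpM2l _ IH) _; first by nra.
have : k%:R * (x * x) <= 4 ^+ k * (x * x) by rewrite ler_wpM2r // mulr_ge0.
have : 4 ^+ k * (x * x) * x <= 4 ^+ k * (x * x).
  by rewrite ler_piMr // !mulr_ge0.
rewrite !expr2; nra.
Qed.

(* Both sides equal 1 at [y = 1], where their derivatives are [q k < t]; so [y] slightly above 1 works. *)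
Lemma exists_base_above_mgf (q : R) (t k : nat) : 0 <= q <= 1 -> (0 < k)%N ->
  q * k%:R < t%:R -> exists2 y : R, 1 < y & 1 + q * (y ^+ k - 1) < y ^+ t.
Proof.
case/andP => q0 q1 k0 qt.
set F : R := 4 ^+ k.
have F0 : 0 < F by rewrite exprn_gt0.
have qk0 : 0 <= q * k%:R by rewrite mulr_ge0.
have t0 : 0 < t%:R :> R by apply: le_lt_trans qt.
have Ft : 0 < F + t%:R by rewrite addr_gt0.
set d := (t%:R - q * k%:R) / (F + t%:R).
have d0 : 0 < d by rewrite divr_gt0 // subr_gt0.
have d1 : d <= 1 by rewrite ler_pdivrMr // mul1r; nra.
have Fd : F * d < t%:R - q * k%:R.
  by rewrite /d mulrCA gtr_pMr ?subr_gt0 // ltr_pdivrMr // mul1r; nra.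
exists (1 + d); first by rewrite ltrDl.
have lower := bernoulli_ineq t _ (ltW d0).
have upper : (1 + d) ^+ k <= 1 + k%:R * d + F * d ^+ 2.
  by apply: exprDn_le_quadratic; rewrite (ltW d0) d1.
have e1 : q * ((1 + d) ^+ k - 1) <= q * (k%:R * d + F * d ^+ 2).
  by apply: ler_wpM2l => //; rewrite lerBlDl addrA.
have e2 : q * (k%:R * d + F * d ^+ 2) <= q * k%:R * d + F * d ^+ 2.
  have Fd2 : 0 <= F * d ^+ 2 by rewrite mulr_ge0 ?exprn_ge0 ?ltW.
  have : q * (F * d ^+ 2) <= F * d ^+ 2 by rewrite ler_piMl.
  rewrite mulrDr mulrA; lra.
have e3 : q * k%:R * d + F * d ^+ 2 < t%:R * d.
  have : F * d * d < (t%:R - q * k%:R) * d by rewrite ltr_pM2r.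
  rewrite expr2 mulrA; nra.
lra.
Qed.

Definition geom_bounded (a : nat -> R) :=
  exists2 rho : R, 0 <= rho < 1 & forall n, a n <= rho ^+ n.

Lemma geom_bounded_uniform (I : finType) (a : I -> nat -> R) :
  (forall i, geom_bounded (a i)) ->
  exists2 rho : R, 0 <= rho < 1 & forall i n, a i n <= rho ^+ n.
Proof.
move=> ha; have /choice[f hf] i : exists rho : R, 0 <= rho < 1 /\ forall n, a i n <= rho ^+ n.
  by have [rho ? ?] := ha i; exists rho.
have f_ge0 i : 0 <= f i by case/andP: (hf i).1.
exists (\big[Order.max/0]_i f i).
  rewrite bigmax_ge_id; apply/bigmax_ltP; split => // i _.
  by case/andP: (hf i).1.
move=> i n; apply: le_trans ((hf i).2 n) _.
by apply: lerXn2r; rewrite ?nnegrE ?le_bigmax //; apply: le_trans (bigmax_ge_id _ _ _ _).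
Qed.

(* Take [c2 = - ln beta] and [c1 = - ln s] for a base [s] in [(max rho 0, 1)]: by Bernoulli,
   [M rho^n <= s^n] as soon as [M <= n (s / r - 1)] for some [r] in [(max rho 0, s)]. *)
Lemma one_minus_exp_neg_Theta_n_geom (q : nat -> R) (M rho beta : R) :
  0 <= rho < 1 -> 0 < beta < 1 -> 0 <= M ->
  (forall n, (0 < n)%N -> beta ^+ n <= 1 - q n <= M * rho ^+ n) ->
  one_minus_exp_neg_Theta_n R q.
Proof.
case/andP=> r0 r1 /andP[b0 b1] M0 hq.
set r := (1 + rho) / 2; set s := (1 + r) / 2.
have r_gt0 : 0 < r by rewrite /r; lra.
have rho_le_r : rho <= r by rewrite /r; lra.
have s_gt0 : 0 < s by rewrite /s; lra.
have s_lt1 : s < 1 by rewrite /s /r; lra.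
set x := s / r - 1.
have x_gt0 : 0 < x by rewrite /x subr_gt0 ltr_pdivlMr // mul1r /s /r; lra.
have sE : s = r * (1 + x) by rewrite /x addrC subrK mulrC divfK // gt_eqF.
have expR_lnX y n : 0 < y -> expR (- (- ln y * n%:R)) = y ^+ n.
  by move=> y0; rewrite mulNr opprK mulrC expRM_natl lnK.
exists (- ln s), (- ln beta), (Num.truncn (M / x)).+1; split; [|split].
- by rewrite oppr_gt0 ln_lt0 // s_gt0 s_lt1.
- by rewrite oppr_gt0 ln_lt0 // b0 b1.
move=> n hn; have n_gt0 : (0 < n)%N by apply: leq_trans hn.
case/andP: (hq n n_gt0) => lo hi.
rewrite !expR_lnX // lo /=; apply: le_trans hi _.
have Mn : M <= n%:R * x.
  rewrite -ler_pdivrMr //; apply/ltW/(lt_le_trans (truncnS_gt _)).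
  by rewrite ler_nat.
have rn : rho ^+ n <= r ^+ n by apply: lerXn2r; rewrite ?nnegrE // ltW.
apply: le_trans (ler_wpM2l M0 rn) _.
rewrite sE [(r * _) ^+ n]exprMn [M * _]mulrC ler_pM2l ?exprn_gt0 //.
by apply: le_trans (bernoulli_ineq n _ (ltW x_gt0)); lra.
Qed.

End GeometricBounds.

Section IIDProbability.
Context {R : realType} {T : finType} (w : T -> R).
Hypotheses (w_ge0 : forall x, 0 <= w x) (sum_w : \sum_x w x = 1).

Definition iid_weight {n} (P : {ffun 'I_n -> T}) : R := \prod_(j < n) w (P j).

Definition iid_prob {n} (E : {ffun 'I_n -> T} -> Prop) : R :=
  \sum_(P : {ffun 'I_n -> T} | `[< E P >]) iid_weight P.

Lemma iid_weight_ge0 n (P : {ffun 'I_n -> T}) : 0 <= iid_weight P.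
Proof. exact: prodr_ge0. Qed.

Lemma sum_iid_weight n : \sum_(P : {ffun 'I_n -> T}) iid_weight P = 1.
Proof.
rewrite /iid_weight -(bigA_distr_bigA (fun=> w)) /=.
by rewrite big1 // => j _; rewrite sum_w.
Qed.

Lemma iid_probE n (E : {ffun 'I_n -> T} -> Prop) :
  iid_prob E = \sum_P iid_weight P * `[< E P >]%:R.
Proof.
rewrite /iid_prob big_mkcond /=; apply: eq_bigr => P _.
by case: ifP => _; rewrite ?mulr1 ?mulr0.
Qed.

Lemma iid_prob_pred0 n (E : {ffun 'I_n -> T} -> Prop) :
  (forall P, ~ E P) -> iid_prob E = 0.
Proof. by move=> E0; rewrite /iid_prob big_pred0 // => P; rewrite asboolF. Qed.

Lemma le_iid_prob n (E F : {ffun 'I_n -> T} -> Prop) :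
  (forall P, E P -> F P) -> iid_prob E <= iid_prob F.
Proof.
move=> EF; rewrite !iid_probE; apply: ler_sum => P _.
rewrite ler_wpM2l ?iid_weight_ge0 //.
by case: (asboolP (E P)) => [/EF/asboolP -> //|_]; rewrite ler_nat.
Qed.

Lemma iid_probC n (E : {ffun 'I_n -> T} -> Prop) :
  1 - iid_prob E = iid_prob (fun P => ~ E P).
Proof.
rewrite -(sum_iid_weight n) !iid_probE -sumrB; apply: eq_bigr => P _.
by rewrite asbool_neg; case: asboolP => _ /=; rewrite ?mulr1 ?mulr0 ?subrr ?subr0.
Qed.

Lemma iid_weight_le_prob n (E : {ffun 'I_n -> T} -> Prop) P0 :
  E P0 -> iid_weight P0 <= iid_prob E.
Proof.
move=> EP0; rewrite iid_probE (bigD1 P0) //= asboolT // mulr1 lerDl.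
by rewrite sumr_ge0 // => P _; rewrite mulr_ge0 ?iid_weight_ge0.
Qed.

Lemma iid_prob_union_bound n (I : finType) (F : {ffun 'I_n -> T} -> Prop)
    (E : I -> {ffun 'I_n -> T} -> Prop) :
  (forall P, F P -> exists i, E i P) -> iid_prob F <= \sum_i iid_prob (E i).
Proof.
move=> FE; under eq_bigr do rewrite iid_probE.
rewrite exchange_big iid_probE /=; apply: ler_sum => P _.
rewrite -mulr_sumr ler_wpM2l ?iid_weight_ge0 //.
case: (asboolP (F P)) => [/FE[i Ei]|_]; last by rewrite sumr_ge0.
by rewrite (bigD1 i) //= asboolT // lerDl sumr_ge0.
Qed.

Lemma geom_bounded_iid_guard (b : Prop) (E : forall n, {ffun 'I_n -> T} -> Prop) :
  (b -> geom_bounded (fun n => iid_prob (E n))) ->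
  geom_bounded (fun n => iid_prob (fun P => b /\ E n P)).
Proof.
case: (pselect b) => [hb /(_ hb)[rho rho01 hrho] | nb _].
  by exists rho => // n; apply: le_trans (hrho n); apply: le_iid_prob => P [].
exists 0 => [|n]; first by rewrite lexx ltr01.
by rewrite iid_prob_pred0 ?exprn_ge0 // => P [].
Qed.

Definition nsat {n} (S : pred T) (P : {ffun 'I_n -> T}) : nat := \sum_(j < n) S (P j).

Lemma card_le_nsat n (S : pred T) (P : {ffun 'I_n -> T}) (N : {set 'I_n}) :
  (forall j, j \in N -> S (P j)) -> (#|N| <= nsat S P)%N.
Proof.
move=> NS; rewrite -sum1_card /nsat [X in (X <= _)%N]big_mkcond /=.
by apply: leq_sum => j _; case: ifP => // /NS ->.
Qed.

(* Chernoff: Markov's inequality for [y ^+ (k * nsat S P)], with the base [y] of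
   [exists_base_above_mgf]; the moment generating function factorizes over voters. *)
Lemma geom_bounded_nsat_tail (S : pred T) (t k : nat) : (0 < k)%N ->
  (\sum_(x | S x) w x) * k%:R < t%:R ->
  geom_bounded (fun n => iid_prob (fun P : {ffun 'I_n -> T} => (t * n <= k * nsat S P)%N)).
Proof.
move=> k_gt0; set q := \sum_(x | S x) w x => qt.
have q_ge0 : 0 <= q by rewrite sumr_ge0.
have q_le1 : q <= 1 by rewrite -sum_w [X in _ <= X](bigID S) /= lerDl sumr_ge0.
have q01 : 0 <= q <= 1 by rewrite q_ge0 q_le1.
have [y y_gt1 hy] := exists_base_above_mgf _ _ _ q01 k_gt0 qt.
set z := y ^+ k.
have z_ge1 : 1 <= z by rewrite exprn_ege1 // ltW.
have z_ge0 : 0 <= z by apply: le_trans z_ge1.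
have yt_gt0 : 0 < y ^+ t by rewrite exprn_gt0 // (lt_trans ltr01).
have base_ge0 : 0 <= 1 + q * (z - 1) by rewrite addr_ge0 // mulr_ge0 // subr_ge0.
exists ((1 + q * (z - 1)) / y ^+ t).
  by rewrite divr_ge0 ?ltr_pdivrMr ?mul1r // ltW.
move=> n; rewrite iid_probE.
have markov (P : {ffun 'I_n -> T}) : iid_weight P * `[< (t * n <= k * nsat S P)%N >]%:R <=
    iid_weight P * (z ^+ nsat S P / (y ^+ t) ^+ n).
  rewrite ler_wpM2l ?iid_weight_ge0 //.
  have ytn : 0 < (y ^+ t) ^+ n by rewrite exprn_gt0.
  case: asboolP => [tail|_]; last by apply: divr_ge0; [exact: exprn_ge0 | exact: ltW].
  rewrite ler_pdivlMr // mul1r -!exprM.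
  by apply: ler_weXn2l => //; apply: ltW.
apply: le_trans (ler_sum _ (fun P _ => markov P)) _.
under eq_bigr do rewrite mulrA.
rewrite -mulr_suml expr_div_n ler_wpM2r ?invr_ge0 ?(ltW (exprn_gt0 n yt_gt0)) //.
have -> : \sum_(P : {ffun 'I_n -> T}) iid_weight P * z ^+ nsat S P =
          \prod_(j < n) \sum_x (w x * z ^+ S x).
  rewrite bigA_distr_bigA; apply: eq_bigr => P _.
  by rewrite /iid_weight /nsat expr_sum -big_split.
rewrite prodr_const card_ord; apply: lerXn2r; rewrite ?nnegrE.
- by apply: sumr_ge0 => x _; apply: mulr_ge0; [exact: w_ge0 | exact: exprn_ge0].
- exact: base_ge0.
have -> : \sum_x w x * z ^+ S x = \sum_x w x + \sum_(x | S x) w x * (z - 1).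
  rewrite [X in _ = _ + X]big_mkcond -big_split /=; apply: eq_bigr => x _.
  by case: (S x); rewrite /= ?expr0 ?expr1 ?mulr1 ?addr0 // mulrBr mulr1 addrC subrK.
by rewrite sum_w -mulr_suml.
Qed.

End IIDProbability.

Section Exchangeable.
Context {R : realType} {m : nat} (w : {set 'I_m} -> R).
Hypotheses (w_ge0 : forall A, 0 <= w A) (sum_w : \sum_A w A = 1).
Hypothesis w_perm : forall (s : {perm 'I_m}) (A : {set 'I_m}), w (s @^-1: A) = w A.

Lemma sum_mem_card (D A : {set 'I_m}) :
  \sum_(y in D) (y \in A)%:R = #|A :&: D|%:R :> R.
Proof.
rewrite -sum1_card natr_sum big_mkcond [RHS]big_mkcond /=.
by apply: eq_bigr => y _; rewrite !inE; case: (y \in A); case: (y \in D).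
Qed.

(* By exchangeability every [y] in [x |: D] has the same expected share
   [1{y in A} / #|A :&: (x |: D)|], and these shares add up to at most 1. *)
Lemma exchangeable_share_le (D : {set 'I_m}) x : x \notin D ->
  \sum_A w A * ((x \in A)%:R / #|A :&: D|.+1%:R) <= #|D|.+1%:R^-1.
Proof.
move=> xD; have card_xD : #|x |: D| = #|D|.+1 by rewrite cardsU1 xD.
have share_xD (A : {set 'I_m}) : (x \in A)%:R / #|A :&: D|.+1%:R =
    (x \in A)%:R / #|A :&: (x |: D)|%:R :> R.
  case xA: (x \in A); last by rewrite !mul0r.
  have -> : A :&: (x |: D) = x |: (A :&: D).
    by apply/setP => z; rewrite !inE; case: eqP => [->|]; rewrite ?xA.
  by rewrite cardsU1 inE (negbTE xD) andbF.
under eq_bigr do rewrite share_xD.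
have x_xD : x \in x |: D by rewrite setU11.
move: (x |: D) card_xD x_xD => D' card_D' x_D'.
pose share y (A : {set 'I_m}) : R := (y \in A)%:R / #|A :&: D'|%:R.
have share_eq y : y \in D' -> \sum_A w A * share y A = \sum_A w A * share x A.
  move=> yD'; set s := tperm x y.
  have sK : involutive (fun A : {set 'I_m} => s @^-1: A).
    by move=> A; apply/setP => z; rewrite !inE tpermK.
  rewrite (reindex_inj (inv_inj sK)) /=; apply: eq_bigr => A _.
  rewrite w_perm /share inE tpermR.
  have sD' : s @^-1: D' = D'.
    by apply/setP => z; rewrite inE; case: tpermP => [->|->|_ _] //; rewrite yD' x_D'.
  by rewrite -{1}sD' -preimsetI card_preimset //; apply: perm_inj.
have shares_le1 (A : {set 'I_m}) : \sum_(y in D') share y A <= 1.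
  rewrite /share -mulr_suml sum_mem_card.
  have [->|c_gt0] := posnP #|A :&: D'|; first by rewrite mul0r.
  by rewrite divff // pnatr_eq0 -lt0n.
have D'_gt0 : 0 < #|D'|%:R :> R by rewrite card_D' ltr0n.
rewrite -card_D' -(ler_pM2l D'_gt0) divff ?gt_eqF // mulr_natl -sumr_const.
rewrite (eq_bigr (fun y => \sum_A w A * share y A)); last by move=> y /share_eq ->.
rewrite exchange_big /= -sum_w; apply: ler_sum => A _.
by rewrite -mulr_sumr -[X in _ <= X]mulr1 ler_wpM2l.
Qed.

Definition prefers (W W' A : {set 'I_m}) : bool := (#|A :&: W| < #|A :&: W'|)%N.

Definition ejr_deviator (W : {set 'I_m}) (a : 'I_m) (l : nat) (A : {set 'I_m}) : bool :=
  (a \in A) && (#|A :&: W| < l)%N.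

(* A voter preferring [W'] to [W] approves more of [W' :\: W] than of [W :\: W'], so its
   indicator is dominated by the shares of [exchangeable_share_le] over [x] in [W' :\: W]. *)
Lemma prefers_mass_lt (W W' : {set 'I_m}) k : #|W| = k ->
  (0 < #|W'| <= k)%N -> (\sum_(A | prefers W W' A) w A) * k%:R < #|W'|%:R.
Proof.
move=> Wk /andP[W'_gt0 W'_le].
set D' := W' :\: W; set D := W :\: W'.
have split_card (A B C : {set 'I_m}) : #|A :&: B| = (#|A :&: B :&: C| + #|A :&: (B :\: C)|)%N.
  by rewrite finset.setIDA cardsID.
have pref_le (A : {set 'I_m}) : (prefers W W' A)%:R <=
    \sum_(x in D') (x \in A)%:R / #|A :&: D|.+1%:R :> R.
  case pA: (prefers W W' A); last by rewrite sumr_ge0 // => x _; rewrite divr_ge0.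
  rewrite -mulr_suml sum_mem_card ler_pdivlMr // mul1r ler_nat.
  by move: pA; rewrite /prefers (split_card A W W') (split_card A W' W) finset.setIAC ltn_add2l.
have mass_le : \sum_(A | prefers W W' A) w A <=
    \sum_(x in D') \sum_A w A * ((x \in A)%:R / #|A :&: D|.+1%:R).
  rewrite exchange_big /= big_mkcond /=; apply: ler_sum => A _.
  rewrite -mulr_sumr; have := pref_le A.
  case: (prefers W W' A) => /= [pref1|_]; last first.
    by apply: mulr_ge0 => //; apply: sumr_ge0 => x _; rewrite divr_ge0.
  by rewrite -[X in X <= _]mulr1 ler_wpM2l.
have shares_le : \sum_(x in D') \sum_A w A * ((x \in A)%:R / #|A :&: D|.+1%:R)
    <= #|D'|%:R / #|D|.+1%:R.
  rewrite mulr_natl -sumr_const; apply: ler_sum => x.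
  rewrite !inE => /andP[xW _]; apply: exchangeable_share_le.
  by rewrite !inE (negbTE xW) andbF.
have cardD : (#|W :&: W'| + #|D|)%N = k by rewrite -Wk cardsID.
have cardD' : (#|W :&: W'| + #|D'|)%N = #|W'| by rewrite finset.setIC cardsID.
have : (#|D'| * k < #|W'| * #|D|.+1)%N by nia.
rewrite -(ltr_nat R) !natrM => lt_nat.
apply: le_lt_trans (ler_wpM2r (ler0n _ k) (le_trans mass_le shares_le)) _.
by rewrite mulrAC ltr_pdivrMr.
Qed.

Lemma ejr_deviator_mass_lt (W : {set 'I_m}) a l k : #|W| = k -> a \notin W ->
  (0 < l)%N -> (\sum_(A | ejr_deviator W a l A) w A) * k%:R < l%:R.
Proof.
move=> Wk aW l_gt0.
have mass_le : \sum_(A | ejr_deviator W a l A) w A <=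
    l%:R * \sum_A w A * ((a \in A)%:R / #|A :&: W|.+1%:R).
  rewrite mulr_sumr big_mkcond /=; apply: ler_sum => A _.
  case: ifP => [/andP[aA lt_l]|_]; last first.
    by apply: mulr_ge0 => //; apply: mulr_ge0 => //; rewrite divr_ge0.
  rewrite aA mulrCA -[X in X <= _]mulr1 ler_wpM2l // mul1r.
  by rewrite ler_pdivlMr // mul1r ler_nat.
have := ler_wpM2l (ler0n R l) (exchangeable_share_le W a aW).
move=> /(le_trans mass_le)/(ler_wpM2r (ler0n _ k))/le_lt_trans; apply.
by rewrite Wk -mulrA gtr_pMr ?ltr0n // mulrC ltr_pdivrMr ?ltr0n // mul1r ltr_nat.
Qed.

End Exchangeable.

Section ImpartialCulture.
Variables (R : realType) (m : nat) (p : R).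
Hypotheses (p_ge0 : 0 <= p) (p_le1 : p <= 1).

Lemma IC_ge0 (A : {set 'I_m}) : 0 <= IC R m p A.
Proof. by rewrite /IC mulr_ge0 // exprn_ge0 // subr_ge0. Qed.

Lemma IC_prodE (A : {set 'I_m}) : IC R m p A = \prod_(i < m) (if i \in A then p else 1 - p).
Proof.
rewrite (bigID (mem A)) /= (eq_bigr (fun=> p)) => [|i -> //].
rewrite [X in _ * X](eq_bigr (fun=> 1 - p)) => [|i /negbTE -> //].
rewrite !prodr_const /IC; congr (_ ^+ _ * _ ^+ _).
by rewrite -{1}(card_ord m) -(cardsC A) addKn; apply: eq_card => i; rewrite !inE.
Qed.

Lemma sum_IC : \sum_A IC R m p A = 1.
Proof.
under eq_bigr do rewrite IC_prodE.
pose to_set (f : {ffun 'I_m -> bool}) : {set 'I_m} := [set i | f i].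
have to_set_bij : bijective to_set.
  exists (fun A : {set 'I_m} => [ffun i => i \in A]) => [f|A].
    by apply/ffunP => i; rewrite ffunE inE.
  by apply/setP => i; rewrite inE ffunE.
rewrite (reindex to_set (onW_bij _ to_set_bij)) /=.
under eq_bigr do under eq_bigr do rewrite inE.
rewrite -(bigA_distr_bigA (fun (i : 'I_m) (b : bool) => if b then p else 1 - p)) /=.
by rewrite big1 // => i _; rewrite big_bool /= addrC subrK.
Qed.

Lemma IC_perm (s : {perm 'I_m}) (A : {set 'I_m}) : IC R m p (s @^-1: A) = IC R m p A.
Proof. by rewrite /IC card_preimset //; apply: perm_inj. Qed.

Lemma PrIC_iid n (E : profile n m -> Prop) : PrIC R n m p E = iid_prob (IC R m p) E.
Proof. by []. Qed.

End ImpartialCulture.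

Definition unanimous {m} n (a : 'I_m) : profile n m := [ffun=> [set a]].

Section ThetaFromCover.
Context {R : realType} {m : nat} {p : R}.
Hypotheses (p_gt0 : 0 < p) (p_lt1 : p < 1).

Lemma one_minus_exp_neg_Theta_n_of_cover (a : 'I_m) (good : forall n, profile n m -> Prop)
    (I : finType) (bad : I -> forall n, profile n m -> Prop) :
  (forall n, (0 < n)%N -> ~ good n (unanimous n a)) ->
  (forall n (P : profile n m), (0 < n)%N -> ~ good n P -> exists i, bad i n P) ->
  (forall i, geom_bounded (fun n => PrIC R n m p (bad i n))) ->
  one_minus_exp_neg_Theta_n R (fun n => PrIC R n m p (good n)).
Proof.
move=> bad_unanimous cover /geom_bounded_uniform[rho rho01 decay].
have IC_ge0 := IC_ge0 R m p (ltW p_gt0) (ltW p_lt1).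
set beta := p * (1 - p) ^+ (m - 1).
have q_ge0 : 0 <= 1 - p by rewrite subr_ge0 ltW.
have q_le1 : 1 - p <= 1 by rewrite gerBl ltW.
have beta01 : 0 < beta < 1.
  rewrite mulr_gt0 ?exprn_gt0 ?subr_gt0 //=; apply: le_lt_trans p_lt1.
  by rewrite ler_piMr ?(ltW p_gt0) ?exprn_ile1.
apply: (one_minus_exp_neg_Theta_n_geom _ _ _ _ rho01 beta01 (ler0n R #|I|)) => n n_gt0.
rewrite PrIC_iid iid_probC ?sum_IC //; apply/andP; split.
  have -> : beta ^+ n = iid_weight (IC R m p) (unanimous n a).
    rewrite /iid_weight (eq_bigr (fun=> beta)) ?prodr_const ?card_ord // => j _.
    by rewrite ffunE /IC cards1.
  exact: iid_weight_le_prob (bad_unanimous n n_gt0).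
have := iid_prob_union_bound _ IC_ge0 _ _ _ _ (fun P => cover n P n_gt0).
move/le_trans; apply.
by rewrite mulr_natl -sumr_const; apply: ler_sum => i _; apply: decay.
Qed.

End ThetaFromCover.

Section CoreAndEJR.
Variables (R : realType) (m k : nat) (p : R).
Hypotheses (k_gt0 : (0 < k)%N) (k_lt_m : (k < m)%N) (p_gt0 : 0 < p) (p_lt1 : p < 1).

Let a0 : 'I_m := Ordinal k_lt_m.
Let W0 : {set 'I_m} := [set widen_ord (ltnW k_lt_m) i | i : 'I_k].

Lemma card_W0 : #|W0| = k.
Proof. by rewrite card_imset ?card_ord // => i j /(congr1 val) /= /val_inj. Qed.

Lemma a0_notin_W0 : a0 \notin W0.
Proof.
apply/imsetP => -[i _ /(congr1 val) /= ki].
by move: (ltn_ord i); rewrite -ki ltnn.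
Qed.

Lemma card_a0_W0 : #|[set a0] :&: W0| = 0%N.
Proof. by apply/eqP; rewrite cards_eq0 setI_eq0 disjoints1 a0_notin_W0. Qed.

Lemma unanimous_a0_not_core n : (0 < n)%N ->
  CORE n m k (unanimous n a0) <> committees m k.
Proof.
move=> n_gt0 coreE; have : committees m k W0 by exact: card_W0.
rewrite -coreE => -[_ /(_ [set: 'I_n] [set a0])].
rewrite cardsT card_ord cards1 => /(_ n_gt0) [].
  by rewrite divff ?pnatr_eq0 -?lt0n // ler_pdivrMr ?ltr0n // mul1r ler1n.
by move=> j _; rewrite ffunE finset.setIid cards1 card_a0_W0.
Qed.

Definition core_blocked (i : {set 'I_m} * {set 'I_m}) n (P : profile n m) : Prop :=
  (#|i.1| = k /\ (0 < #|i.2| <= k)%N) /\ (#|i.2| * n <= k * nsat (prefers i.1 i.2) P)%N.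

Lemma core_blocked_cover n (P : profile n m) : (0 < n)%N ->
  CORE n m k P <> committees m k -> exists i, core_blocked i n P.
Proof.
move=> n_gt0 coreN; apply: contrapT => unblocked; apply: coreN.
apply/seteqP; split => W /=; first by case.
move=> Wk; split => // N' W' N'_gt0 ratio; apply: contrapT => no_j.
have prefN' j : j \in N' -> prefers W W' (P j).
  by move=> jN'; rewrite /prefers ltnNge; apply/negP => W_ge; apply: no_j; exists j.
have ratio_nat : (#|W'| * n <= #|N'| * k)%N.
  by move: ratio; rewrite ler_pdivrMr ?ltr0n // mulrAC ler_pdivlMr ?ltr0n // -!natrM ler_nat.
have N'_le_n : (#|N'| <= n)%N by rewrite -[X in (_ <= X)%N]card_ord max_card.
have [j jN'] := card_gt0P N'_gt0.
have W'_gt0 : (0 < #|W'|)%N.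
  apply: leq_ltn_trans (leq0n _) (leq_trans (prefN' j jN') _).
  exact/subset_leq_card/subsetIr.
have W'_le_k : (#|W'| <= k)%N by nia.
apply: unblocked; exists (W, W'); split; first by rewrite Wk W'_gt0 W'_le_k.
by apply: leq_trans ratio_nat _; rewrite mulnC leq_mul2l card_le_nsat ?orbT.
Qed.

Lemma CORE_Theta : one_minus_exp_neg_Theta_n R
  (fun n => PrIC R n m p (fun P : profile n m => CORE n m k P = committees m k)).
Proof.
have IC_ge0 := IC_ge0 R m p (ltW p_gt0) (ltW p_lt1).
apply: (one_minus_exp_neg_Theta_n_of_cover p_gt0 p_lt1 a0).
- exact: unanimous_a0_not_core.
- exact: core_blocked_cover.
move=> [W W']; apply: (geom_bounded_iid_guard _ IC_ge0) => -[Wk W'_bounds].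
apply: (geom_bounded_nsat_tail _ IC_ge0 (sum_IC R m p) _ _ _ k_gt0).
exact: prefers_mass_lt IC_ge0 (sum_IC R m p) (IC_perm R m p) _ _ _ Wk W'_bounds.
Qed.

Lemma unanimous_a0_not_EJRp n : (0 < n)%N ->
  EJRp n m k (unanimous n a0) <> committees m k.
Proof.
move=> n_gt0 ejrE; have : committees m k W0 by exact: card_W0.
rewrite -ejrE => -[_]; apply; exists a0, 1%N, [set: 'I_n]; split.
- exact: a0_notin_W0.
- by [].
- by rewrite cardsT card_ord mul1r ler_pdivrMr ?ltr0n // -natrM ler_nat leq_pmulr.
- by move=> j _; rewrite ffunE set11 card_a0_W0.
Qed.

(* The level [l] only needs to range over [1..k]: [l n / k <= |N'| <= n]. *)
Definition EJR_blocked (i : {set 'I_m} * 'I_m * 'I_k.+1) n (P : profile n m) : Prop :=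
  [/\ #|i.1.1| = k, i.1.2 \notin i.1.1 & (0 < i.2)%N] /\
  (i.2 * n <= k * nsat (ejr_deviator i.1.1 i.1.2 i.2) P)%N.

Lemma EJR_blocked_cover n (P : profile n m) : (0 < n)%N ->
  EJRp n m k P <> committees m k -> exists i, EJR_blocked i n P.
Proof.
move=> n_gt0 ejrN; apply: contrapT => unblocked; apply: ejrN.
apply/seteqP; split => W /=; first by case.
move=> Wk; split => // -[a [l [N' [aW l_gt0 ratio devN']]]].
have ratio_nat : (l * n <= #|N'| * k)%N.
  by move: ratio; rewrite ler_pdivrMr ?ltr0n // -!natrM ler_nat.
have N'_le_n : (#|N'| <= n)%N by rewrite -[X in (_ <= X)%N]card_ord max_card.
have l_lt_k1 : (l < k.+1)%N by rewrite ltnS; nia.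
have devN'_ejr j : j \in N' -> ejr_deviator W a l (P j).
  by move=> /devN'[aP lt_l]; rewrite /ejr_deviator aP lt_l.
apply: unblocked; exists (W, a, Ordinal l_lt_k1); split=> //=.
by apply: leq_trans ratio_nat _; rewrite mulnC leq_mul2l card_le_nsat ?orbT.
Qed.

Lemma EJRp_Theta : one_minus_exp_neg_Theta_n R
  (fun n => PrIC R n m p (fun P : profile n m => EJRp n m k P = committees m k)).
Proof.
have IC_ge0 := IC_ge0 R m p (ltW p_gt0) (ltW p_lt1).
apply: (one_minus_exp_neg_Theta_n_of_cover p_gt0 p_lt1 a0).
- exact: unanimous_a0_not_EJRp.
- exact: EJR_blocked_cover.
move=> [[W a] l]; apply: (geom_bounded_iid_guard _ IC_ge0) => -[Wk aW l_gt0].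
apply: (geom_bounded_nsat_tail _ IC_ge0 (sum_IC R m p) _ _ _ k_gt0).
exact: ejr_deviator_mass_lt IC_ge0 (sum_IC R m p) (IC_perm R m p) _ _ _ _ Wk aW l_gt0.
Qed.

End CoreAndEJR.

Theorem corollary3 (R : realType) (m k : nat) (p : R) :
  (0 < k)%N -> (k < m)%N -> 0 < p -> p < 1 ->
  one_minus_exp_neg_Theta_n R
    (fun n => PrIC R n m p (fun P : profile n m => CORE n m k P = committees m k)) /\
  one_minus_exp_neg_Theta_n R
    (fun n => PrIC R n m p (fun P : profile n m => EJRp n m k P = committees m k)).
Proof.
move=> k_gt0 k_lt_m p_gt0 p_lt1.
by split; [exact: CORE_Theta | exact: EJRp_Theta].
Qed.
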